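(* Let $p$ be a prime, let $$\Gamma = \left\{ \begin{pmatrix}1&x_{12}&x_{13}&x_{14}\\ 0 &p^k&x_{23}&x_{24}\\0&0&p^n&x_{34}\\0&0&0&1 \end{pmatrix} : x_{ij}\in \mathbb Z[1/p], \ k, n\in \mathbb Z\right\}$$ (Abels's group) and let $N\le\Gamma$ be the central subgroup of matrices of the form $I+xE_{14}$ with $x\in\mathbb Z$ (identity matrix with $x$ in the $(1,4)$ entry). Then the amalgamated free product $\Gamma \ast_{N=N} \Gamma$ is not maximally almost periodic.
   Context: A group is maximally almost periodic (MAP) if its finite-dimensional unitary representations separate its points. $\Gamma\ast_{N=N}\Gamma$ denotes the free product of two copies of $\Gamma$ amalgamated along the identity map of $N$. *)

From HB Require Import structures.
From mathcomp Require Import all_boot all_order all_algebra.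
From mathcomp Require Import complex.
From mathcomp Require Import Rstruct.
Set Implicit Arguments. Unset Strict Implicit. Unset Printing Implicit Defensive.
Import Order.TTheory GRing.Theory Num.Theory.
Local Open Scope ring_scope.

Definition Cplx : numClosedFieldType := (Rdefinitions.R)[i].

Definition zinvp (p : nat) (x : rat) : Prop :=
  exists (m : nat) (z : int), x = z%:~R / (p%:R ^+ m).

Definition inGamma (p : nat) (A : 'M[rat]_4) : Prop :=
  (exists k n : int,
      A (inord 0) (inord 0) = 1 /\ A (inord 1) (inord 1) = (p%:R : rat) ^ k /\
      A (inord 2) (inord 2) = (p%:R : rat) ^ n /\ A (inord 3) (inord 3) = 1) /\
  (forall i j : 'I_4, (j < i)%N -> A i j = 0) /\
  (forall i j : 'I_4, (i < j)%N -> zinvp p (A i j)).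

Definition inN (A : 'M[rat]_4) : Prop :=
  exists z : int, A = 1%:M + z%:~R *: delta_mx (inord 0) (inord 3).

(* Words in the free product of two copies of Gamma: letters (b, g) with
   b : bool indicating the copy (true = first, false = second). *)
Definition word := seq (bool * 'M[rat]_4).

Definition valid_word (p : nat) (w : word) : Prop :=
  forall l, l \in w -> inGamma p l.2.

(* The congruence defining Gamma *_{N=N} Gamma on words. *)
Inductive amal_eq (p : nat) : word -> word -> Prop :=
| ae_refl w : amal_eq p w w
| ae_sym w w' : amal_eq p w w' -> amal_eq p w' w
| ae_trans w1 w2 w3 : amal_eq p w1 w2 -> amal_eq p w2 w3 -> amal_eq p w1 w3
| ae_mul (u v : word) (b : bool) (g h : 'M[rat]_4) :
    inGamma p g -> inGamma p h ->
    amal_eq p (u ++ (b, g) :: (b, h) :: v) (u ++ (b, g *m h) :: v)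
| ae_one (u v : word) (b : bool) :
    amal_eq p (u ++ (b, 1%:M) :: v) (u ++ v)
| ae_amalg (u v : word) (x : 'M[rat]_4) :
    inN x -> amal_eq p (u ++ (true, x) :: v) (u ++ (false, x) :: v).

Definition unitary (n : nat) (U : 'M[Cplx]_n) : Prop :=
  U *m (map_mx (fun z : Cplx => z^*) U)^T = 1%:M.

(* n-dimensional unitary representation of the amalgam (words modulo amal_eq,
   multiplication = concatenation) *)
Definition amal_rep (p n : nat) (f : word -> 'M[Cplx]_n) : Prop :=
  (forall w w', valid_word p w -> valid_word p w' -> amal_eq p w w' -> f w = f w') /\
  (forall w w', valid_word p w -> valid_word p w' -> f (w ++ w') = f w *m f w') /\
  (forall w, valid_word p w -> unitary (f w)).

(* Gamma *_{N=N} Gamma is maximally almost periodic: finite-dimensional unitary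
   representations separate points (equivalently, detect every nontrivial element). *)
Definition amalgam_MAP (p : nat) : Prop :=
  forall w : word, valid_word p w -> ~ amal_eq p w [::] ->
    exists (n : nat) (f : word -> 'M[Cplx]_n), amal_rep p f /\ f w <> 1%:M.

From mathcomp Require Import all_boot all_order all_algebra.
From mathcomp Require Import ring spectral.
Set Implicit Arguments. Unset Strict Implicit. Unset Printing Implicit Defensive.
Import Order.TTheory GRing.Theory Num.Theory.
Local Open Scope ring_scope.

(* Matrix indices are 0-based below, so [elem (inord 0) (inord 3) x] is the
   paper's I + x E_14.

   Put a = I + p^-1 E_12, b = I + E_24, c = I + p^-1 E_14 and
   d = diag(1, p^-1, 1, 1) in Gamma, and let z = I + E_14 generate N.  Then
   a^p d = d a, a^m b = c^m b a^m and c^p = z.  In a finite-dimensional unitary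
   representation rho the matrix rho(a) is diagonalizable and conjugate to
   rho(a)^p, so x |-> x^p maps its finite spectrum onto itself; some iterate
   fixes the spectrum and rho(a)^(p^K) = rho(a) with K > 0.  The commutator
   relation then gives rho(c)^(p^K) = rho(c), hence rho(c) is a power of
   rho(z).  As z is amalgamated, both copies of c have the same image, so every
   unitary representation of the amalgam kills c_1 c_2^-1.  This element is
   nevertheless nontrivial: the homomorphism to Gamma/N that is the identity on
   the first factor and trivial on the second sends it to c, which is not in N. *)

Section Elementary.
Variables (R : comNzRingType) (n : nat).
Implicit Types (i j k : 'I_n) (x y u : R).

Definition elem i j x : 'M[R]_n := 1%:M + x *: delta_mx i j.

Lemma elem0 i j : elem i j 0 = 1%:M.
Proof. by rewrite /elem scale0r addr0. Qed.

Ltac expand_elem :=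
  rewrite /elem; do ![rewrite mulmxDl | rewrite mulmxDr | rewrite mul1mx | rewrite mulmx1
    | rewrite -scalemxAl | rewrite -scalemxAr | rewrite mul_delta_mx_cond].
Ltac entrywise := apply/matrixP => r c; rewrite !mxE; ring.

Lemma elemD i j x y : i != j -> elem i j x *m elem i j y = elem i j (x + y).
Proof. by move=> ne_ij; expand_elem; rewrite eq_sym (negbTE ne_ij); entrywise. Qed.

Lemma elemX i j x m : i != j -> elem i j x ^+ m = elem i j (x *+ m).
Proof.
move=> ne_ij; elim: m => [|m IH]; first by rewrite expr0 mulr0n elem0.
by rewrite exprSr IH -mulmxE elemD // mulrSr.
Qed.

Lemma elem_commutator i j k x y : i != j -> j != k -> i != k ->
  elem i j x *m elem j k y = elem i k (x * y) *m elem j k y *m elem i j x.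
Proof.
move=> ne_ij ne_jk ne_ik; expand_elem.
rewrite eqxx (eq_sym k i) (eq_sym k j) (negbTE ne_ik) (negbTE ne_jk) !mulr0n !mul0mx.
entrywise.
Qed.

Lemma elem_dilation i j x u : i != j ->
  elem i j x *m elem j j u = elem j j u *m elem i j (x * (1 + u)).
Proof. by move=> ne_ij; expand_elem; rewrite eqxx eq_sym (negbTE ne_ij); entrywise. Qed.

Lemma elem_offdiag i j x r c : r != c -> elem i j x r c = x *+ ((r == i) && (c == j)).
Proof. by move=> /negbTE ne_rc; rewrite !mxE ne_rc mulr_natr add0r. Qed.

Lemma elem_same_offdiag i x r c : r != c -> elem i i x r c = 0.
Proof.
move=> ne_rc; rewrite elem_offdiag //; have [eq_ri|] //= := eqVneq r i.
by rewrite -eq_ri eq_sym (negbTE ne_rc).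
Qed.

Lemma elem_same_diag i x r : elem i i x r r = 1 + x *+ (r == i).
Proof. by rewrite !mxE eqxx andbb mulr_natr. Qed.

Lemma elem_diag i j x r : i != j -> elem i j x r r = 1.
Proof.
move=> ne_ij; rewrite !mxE eqxx; case: eqP => [->|] /=; last by rewrite mulr0 addr0.
by rewrite (negbTE ne_ij) mulr0 addr0.
Qed.

End Elementary.

Section UpperTriangular.
Variables (R : pzSemiRingType) (n : nat).
Implicit Types A B : 'M[R]_n.

Definition upper_trig A := forall i j : 'I_n, (j < i)%N -> A i j = 0.

Lemma upper_trig_mul A B : upper_trig A -> upper_trig B -> upper_trig (A *m B).
Proof.
move=> A_trig B_trig i j lt_ji; rewrite mxE big1 // => k _.
have [lt_ki|le_ik] := ltnP k i; first by rewrite A_trig ?mul0r.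
by rewrite B_trig ?mulr0 // (leq_trans lt_ji le_ik).
Qed.

Lemma upper_trig_mul_diag A B i : upper_trig A -> upper_trig B ->
  (A *m B) i i = A i i * B i i.
Proof.
move=> A_trig B_trig; rewrite mxE (bigD1 i) //= big1 ?addr0 // => k ne_ki.
have [lt_ki|lt_ik|/val_inj eq_ki] := ltngtP k i.
- by rewrite A_trig ?mul0r.
- by rewrite B_trig ?mulr0.
- by rewrite eq_ki eqxx in ne_ki.
Qed.

End UpperTriangular.

Lemma upper_trig_corner_commute (R : pzSemiRingType) n (A : 'M[R]_n.+1) :
  upper_trig A -> A 0 0 = A ord_max ord_max ->
  A *m delta_mx 0 ord_max = delta_mx 0 ord_max *m A.
Proof.
move=> A_trig A_corner; apply/matrixP => i j; rewrite !mxE.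
rewrite (bigD1 0) // [in RHS](bigD1 ord_max) //= !big1 ?addr0 => [|k|k] /=;
  try by move=> /negbTE ne_k; rewrite mxE ne_k ?andbF /= ?mulr0 ?mul0r.
rewrite !mxE !eqxx /= andbT.
have [->|ne_j] := eqVneq j ord_max; have [->|ne_i] := eqVneq i 0;
  rewrite ?mulr1 ?mul1r ?mulr0 ?mul0r //.
- by rewrite A_trig // lt0n; move: ne_i; rewrite -val_eqE.
- by rewrite A_trig // ltn_neqAle -ltnS ltn_ord andbT; move: ne_j; rewrite -val_eqE.
Qed.

Lemma iter_periodic_on_image (T : Type) (I : finType) (phi : T -> T) (s : I -> T) :
  (forall i, exists j, phi (s j) = s i) ->
  exists2 K, (0 < K)%N & forall i, iter K phi (s i) = s i.
Proof.
move=> onto; have [psi psiP] := fin_all_exists onto.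
have s_iter k i : s i = iter k phi (s (iter k psi i)).
  by elim: k => //= k IH; rewrite IH -psiP -iterSr.
pose Psi (g : {ffun I -> I}) := [ffun i => psi (g i)].
have Psi_iter k : iter k Psi [ffun i => i] = [ffun i => iter k psi i].
  by elim: k => [|k IH]; apply/ffunP => i; rewrite /= ?IH !ffunE.
set b := order Psi [ffun i => i].
have /trajectP[a lt_ab] := looping_order Psi [ffun i => i].
rewrite !Psi_iter => /ffunP psi_ba; exists (b - a)%N; first by rewrite subn_gt0.
move=> i; have y_periodic : iter (b - a) phi (s (iter a psi i)) = s (iter a psi i).
  rewrite {2}(s_iter (b - a)%N) -iterD subnK ?(ltnW lt_ab) //.
  by move: (psi_ba i); rewrite !ffunE => ->.
by rewrite (s_iter a) -iterD addnC iterD y_periodic.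
Qed.

Lemma iter_expr (R : pzSemiRingType) (x : R) q K :
  iter K (fun y => y ^+ q) x = x ^+ (q ^ K).
Proof. by elim: K => [|K IH] /=; rewrite ?expr1 // IH expnSr exprM. Qed.

Lemma expr_period (R : pzSemiRingType) (x : R) q K j :
  x ^+ (q ^ K) = x -> x ^+ (q ^ (K * j)) = x.
Proof. by move=> xK; elim: j => [|j IH]; rewrite ?muln0 ?expr1 // mulnS expnD exprM xK. Qed.

Section Eigenvalues.
Variables (F : fieldType) (n : nat).

Lemma eigenvalue_conj (P A : 'M[F]_n) a : P \in unitmx ->
  eigenvalue (invmx P *m A *m P) a = eigenvalue A a.
Proof.
have conj_sub (V f : 'M[F]_n) : V \in unitmx ->
    {subset eigenvalue (conjmx V f) <= eigenvalue f}.
  move=> V_unit; apply: eigenvalue_conjmx; last by rewrite row_free_unit.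
  by rewrite submx_full ?row_full_unit.
move=> P_unit; rewrite -conjVmx //; apply/idP/idP.
  by apply: conj_sub; rewrite unitmx_inv.
by rewrite -{1}(conjmxVK A P_unit); apply: conj_sub.
Qed.

Lemma eigenvalue_diag_mx (s : 'rV[F]_n) a :
  eigenvalue (diag_mx s) a = (a \in codom (s 0)).
Proof.
rewrite eigenvalue_root_char char_poly_trig ?diag_mx_is_trig //.
under eq_bigr do rewrite mxE eqxx mulr1n.
by rewrite -(big_image _ _ (s 0) predT (fun b => 'X - b%:P)) root_prod_XsubC.
Qed.

End Eigenvalues.

Lemma expr_conj_invmx (R : comUnitRingType) n (P X : 'M[R]_n) m : P \in unitmx ->
  (invmx P *m X *m P) ^+ m = invmx P *m X ^+ m *m P.
Proof.
move=> P_unit; elim: m => [|m IH]; first by rewrite !expr0 mulmx1 mulVmx.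
by rewrite !exprSr IH -!mulmxE !mulmxA mulmxK // -!mulmxA.
Qed.

Lemma diag_mx_expr (R : comPzRingType) n (s : 'rV[R]_n) m :
  diag_mx s ^+ m = diag_mx (\row_j s 0 j ^+ m).
Proof.
elim: m => [|m IH].
  by rewrite expr0; apply/matrixP => i j; rewrite !mxE expr0.
by rewrite exprSr IH -mulmxE mulmx_diag; congr diag_mx; apply/rowP => j; rewrite !mxE exprSr.
Qed.

Lemma normalmx_conj_expr_period (C : numClosedFieldType) n (A D : 'M[C]_n) q :
  A \is normalmx -> D \in unitmx -> D *m A = A ^+ q *m D ->
  exists2 K, (0 < K)%N & A ^+ (q ^ K) = A.
Proof.
move=> /orthomx_spectralP A_diag D_unit DA.
move: A_diag; set P := spectralmx A; set s := spectral_diag A => A_diag.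
have P_unit : P \in unitmx := spectral_unit A.
have A_expr m : A ^+ m = invmx P *m diag_mx (\row_j s 0 j ^+ m) *m P.
  by rewrite {1}A_diag expr_conj_invmx // diag_mx_expr.
have Aq_conj : A ^+ q = invmx (invmx D) *m A *m invmx D.
  by rewrite invmxK DA mulmxK.
have onto i : exists j, s 0 j ^+ q = s 0 i.
  have : eigenvalue (A ^+ q) (s 0 i).
    rewrite Aq_conj eigenvalue_conj ?unitmx_inv // A_diag eigenvalue_conj //.
    by rewrite eigenvalue_diag_mx codom_f.
  rewrite A_expr eigenvalue_conj // eigenvalue_diag_mx => /codomP [j].
  by rewrite mxE => ->; exists j.
have [K K_gt0 sK] := iter_periodic_on_image (phi := fun x => x ^+ q) onto.
exists K => //; rewrite A_expr [RHS]A_diag; congr (_ *m diag_mx _ *m _).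
by apply/rowP => j; rewrite mxE -iter_expr sK.
Qed.

Lemma inord4_eq a b : (a < 4)%N -> (b < 4)%N -> (inord a == inord b :> 'I_4) = (a == b).
Proof. by move=> a_lt b_lt; rewrite -val_eqE /= !inordK. Qed.

Definition corner : 'M[rat]_4 := delta_mx (inord 0) (inord 3).

Definition corner_central (g : 'M[rat]_4) : bool := g *m corner == corner *m g.

Lemma corner_central_elem g x : corner_central g ->
  elem (inord 0) (inord 3) x *m g = g *m elem (inord 0) (inord 3) x.
Proof.
move=> /eqP gE; rewrite /elem mulmxDl mulmxDr mul1mx mulmx1 -scalemxAl -scalemxAr.
by rewrite -/corner gE.
Qed.

Section AbelsGroup.
Variable p : nat.
Hypothesis p_gt0 : (0 < p)%N.

Lemma natr_p_neq0 : (p%:R : rat) != 0.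
Proof. by rewrite pnatr_eq0 -lt0n. Qed.

Lemma zinvp_int (z : int) : zinvp p z%:~R.
Proof. by exists 0%N, z; rewrite expr0 divr1. Qed.

Lemma zinvp0 : zinvp p 0.
Proof. exact: (zinvp_int 0). Qed.

Lemma zinvpD x y : zinvp p x -> zinvp p y -> zinvp p (x + y).
Proof.
move=> [m1 [z1 ->]] [m2 [z2 ->]]; exists (m1 + m2)%N, (z1 * p%:Z ^+ m2 + z2 * p%:Z ^+ m1).
rewrite intrD !intrM !rmorphXn /= exprD.
by field; rewrite !expf_neq0 ?natr_p_neq0.
Qed.

Lemma zinvpM x y : zinvp p x -> zinvp p y -> zinvp p (x * y).
Proof.
move=> [m1 [z1 ->]] [m2 [z2 ->]]; exists (m1 + m2)%N, (z1 * z2).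
by rewrite intrM exprD invfM mulrACA.
Qed.

Lemma zinvpN x : zinvp p x -> zinvp p (- x).
Proof. by move=> [m [z ->]]; exists m, (- z); rewrite intrN mulNr. Qed.

Lemma zinvpX (k : int) : zinvp p (p%:R ^ k).
Proof.
case: k => m; first by exists 0%N, (p%:Z ^+ m); rewrite rmorphXn expr0 divr1.
by exists m.+1, 1; rewrite mul1r.
Qed.

Lemma zinvp_sum (I : finType) (F : I -> rat) :
  (forall i, zinvp p (F i)) -> zinvp p (\sum_i F i).
Proof. by move=> F_zinvp; elim/big_ind: _ => //; [exact: zinvp0 | exact: zinvpD]. Qed.

Lemma Gamma_upper_trig g : inGamma p g -> upper_trig g.
Proof. by case=> _ []. Qed.

Lemma Gamma_entries g i j : inGamma p g -> zinvp p (g i j).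
Proof.
move=> [[k [n [g00 [g11 [g22 g33]]]]] [g_trig g_upper]].
have [lt_ij|lt_ji|/val_inj <-] := ltngtP i j; first exact: g_upper.
  by rewrite g_trig //; apply: zinvp0.
have [a a_lt ->] : exists2 a, (a < 4)%N & i = inord a by exists i; rewrite ?inord_val.
case: a a_lt => [|[|[|[|]]]] // _; rewrite ?g00 ?g11 ?g22 ?g33.
all: first [exact: (zinvp_int 1) | exact: zinvpX].
Qed.

Lemma Gamma_mul g h : inGamma p g -> inGamma p h -> inGamma p (g *m h).
Proof.
move=> Gg Gh; have g_trig := Gamma_upper_trig Gg; have h_trig := Gamma_upper_trig Gh.
case: (Gg) => [[k [n [g00 [g11 [g22 g33]]]]] _].
case: (Gh) => [[k' [n' [h00 [h11 [h22 h33]]]]] _].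
split; [|split].
- exists (k + k'), (n + n'); rewrite !upper_trig_mul_diag // g00 g11 g22 g33 h00 h11 h22 h33.
  by rewrite mulr1 !expfzDr ?natr_p_neq0.
- exact: upper_trig_mul.
- move=> i j _; rewrite mxE; apply: zinvp_sum => l.
  by apply: zinvpM; apply: Gamma_entries.
Qed.

Lemma Gamma_elem (i j : 'I_4) x : (i < j)%N -> zinvp p x -> inGamma p (elem i j x).
Proof.
move=> lt_ij x_zinvp; have ne_ij : i != j by rewrite -val_eqE /= ltn_eqF.
split; [|split].
- by exists 0, 0; rewrite !elem_diag ?expr0z.
- move=> r c lt_cr; rewrite elem_offdiag; last by rewrite -val_eqE /= gtn_eqF.
  have [eq_ri|] //= := eqVneq r i; have [eq_cj|] //= := eqVneq c j.
  by move: lt_cr; rewrite eq_ri eq_cj ltnNge ltnW.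
- move=> r c lt_rc; rewrite elem_offdiag; last by rewrite -val_eqE /= ltn_eqF.
  by case: (_ && _); [exact: x_zinvp | exact: zinvp0].
Qed.

Lemma Gamma1 : inGamma p 1%:M.
Proof.
rewrite -(@elem0 _ _ (inord 0) (inord 1)).
by apply: Gamma_elem zinvp0; rewrite !inordK.
Qed.

Lemma Gamma_expr g m : inGamma p g -> inGamma p (g ^+ m).
Proof.
move=> Gg; elim: m => [|m IH]; first exact: Gamma1.
by rewrite exprSr -mulmxE; apply: Gamma_mul.
Qed.

Lemma Gamma_dilation u (k : int) :
  1 + u = p%:R ^ k -> inGamma p (elem (inord 1) (inord 1) u).
Proof.
move=> u_eq; split; [|split].
- by exists k, 0; rewrite !elem_same_diag !inord4_eq //= !mulr0n !addr0 -u_eq expr0z.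
- by move=> r c lt_cr; rewrite elem_same_offdiag // -val_eqE /= gtn_eqF.
- move=> r c lt_rc; rewrite elem_same_offdiag; first exact: zinvp0.
  by rewrite -val_eqE /= ltn_eqF.
Qed.

Lemma inN_Gamma x : inN x -> inGamma p x.
Proof. by case=> z ->; apply: Gamma_elem (zinvp_int z); rewrite !inordK. Qed.

Lemma Gamma_corner_central g : inGamma p g -> corner_central g.
Proof.
move=> Gg; apply/eqP; have g_trig := Gamma_upper_trig Gg.
case: Gg => [[_ [_ [g00 [_ [_ g33]]]]] _].
have i0 : inord 0 = 0 :> 'I_4 by apply: val_inj; rewrite /= inordK.
have i3 : inord 3 = ord_max :> 'I_4 by apply: val_inj; rewrite /= inordK.
rewrite /corner i0 i3 in g00 g33 *.
by apply: upper_trig_corner_commute => //; rewrite g00 g33.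
Qed.

End AbelsGroup.

Section Generators.
Variable p : nat.
Hypothesis p_gt0 : (0 < p)%N.

Definition abels_a : 'M[rat]_4 := elem (inord 0) (inord 1) p%:R^-1.
Definition abels_b : 'M[rat]_4 := elem (inord 1) (inord 3) 1.
Definition abels_c : 'M[rat]_4 := elem (inord 0) (inord 3) p%:R^-1.
Definition abels_c_inv : 'M[rat]_4 := elem (inord 0) (inord 3) (- p%:R^-1).
Definition abels_d : 'M[rat]_4 := elem (inord 1) (inord 1) (p%:R^-1 - 1).
Definition abels_z : 'M[rat]_4 := elem (inord 0) (inord 3) 1.

Lemma zinvp_invp : zinvp p p%:R^-1.
Proof. by exists 1%N, 1; rewrite mul1r expr1. Qed.

Lemma Gamma_abels_a : inGamma p abels_a.
Proof. by apply: Gamma_elem zinvp_invp; rewrite !inordK. Qed.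

Lemma Gamma_abels_b : inGamma p abels_b.
Proof. by apply: Gamma_elem (zinvp_int p 1); rewrite !inordK. Qed.

Lemma Gamma_abels_c : inGamma p abels_c.
Proof. by apply: Gamma_elem zinvp_invp; rewrite !inordK. Qed.

Lemma Gamma_abels_c_inv : inGamma p abels_c_inv.
Proof. by apply: Gamma_elem (zinvpN zinvp_invp); rewrite !inordK. Qed.

Lemma Gamma_abels_d : inGamma p abels_d.
Proof. by apply: (@Gamma_dilation p _ (-1)); rewrite addrC subrK exprN1. Qed.

Lemma inN_abels_z : inN abels_z.
Proof. by exists 1. Qed.

Lemma abels_commutator m :
  abels_a ^+ m *m abels_b = abels_c ^+ m *m abels_b *m abels_a ^+ m.
Proof. by rewrite !elemX ?inord4_eq // elem_commutator ?inord4_eq // mulr1. Qed.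

Lemma abels_dilate : abels_a ^+ p *m abels_d = abels_d *m abels_a.
Proof.
rewrite elemX ?inord4_eq // elem_dilation ?inord4_eq //; congr (_ *m elem _ _ _).
by rewrite addrC subrK -(mulr_natr p%:R^-1) mulVf ?natr_p_neq0 ?mul1r.
Qed.

Lemma abels_c_expp : abels_c ^+ p = abels_z.
Proof. by rewrite elemX ?inord4_eq // -(mulr_natr p%:R^-1) mulVf ?natr_p_neq0. Qed.

Lemma abels_c_mulV : abels_c *m abels_c_inv = 1%:M.
Proof. by rewrite elemD ?inord4_eq // subrr elem0. Qed.

End Generators.

(* The map Gamma *_N Gamma -> Gamma/N that is the identity on the first factor
   and trivial on the second.  [amal_eq] also relates words with letters
   outside Gamma; keeping only the letters that commute with [corner] (as all
   of Gamma does) keeps N central. *)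
Definition first_copy (w : word) : 'M[rat]_4 :=
  \prod_(l <- w | l.1 && corner_central l.2) l.2.

Lemma first_copy_cat u v : first_copy (u ++ v) = first_copy u *m first_copy v.
Proof. by rewrite /first_copy big_cat mulmxE. Qed.

Lemma corner_central_first_copy w : corner_central (first_copy w).
Proof.
rewrite /first_copy; elim/big_ind: _ => [|g h /eqP gE /eqP hE|[b g] /andP[_ //]].
  by rewrite /corner_central mulmx1 mul1mx.
by apply/eqP; rewrite -mulmxE -mulmxA hE !mulmxA gE.
Qed.

Section FirstCopy.
Variable p : nat.
Hypothesis p_gt0 : (0 < p)%N.

Lemma amal_eq_first_copy w w' : amal_eq p w w' ->
  exists z : int, first_copy w = first_copy w' *m elem (inord 0) (inord 3) z%:~R.
Proof.
have ne03 : inord 0 != inord 3 :> 'I_4 by rewrite inord4_eq.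
elim=> {w w'} [w | w w' _ [z ->] | w1 w2 w3 _ [z1 ->] _ [z2 ->]
              | u v b g h Gg Gh | u v b | u v x [z ->]].
- by exists 0; rewrite mulr0z elem0 mulmx1.
- by exists (- z); rewrite -mulmxA elemD // intrN subrr elem0 mulmx1.
- by exists (z2 + z1); rewrite -mulmxA elemD // intrD.
- exists 0; rewrite mulr0z elem0 mulmx1 !first_copy_cat /first_copy !big_cons /=.
  case: b => //=; rewrite !(Gamma_corner_central (p := p)) //; last exact: Gamma_mul.
  by rewrite mulrA -mulmxE.
- exists 0; rewrite mulr0z elem0 mulmx1 !first_copy_cat /first_copy big_cons /=.
  by case: ifP; rewrite ?mul1r.
- exists z; rewrite !first_copy_cat /first_copy !big_cons /=.
  rewrite (Gamma_corner_central (p := p)); last by apply: inN_Gamma; exists z.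
  rewrite -/(first_copy v) -[1%:M + _]/(elem (inord 0) (inord 3) z%:~R) -mulmxE.
  by rewrite corner_central_elem ?corner_central_first_copy // mulmxA.
Qed.

Lemma abels_word_nontrivial : prime p ->
  ~ amal_eq p [:: (true, abels_c p); (false, abels_c_inv p)] [::].
Proof.
move=> p_prime /amal_eq_first_copy [z].
rewrite /first_copy !big_cons big_nil /= (Gamma_corner_central (Gamma_abels_c p)).
rewrite mulr1 mul1mx => /matrixP /(_ (inord 0) (inord 3)).
rewrite !elem_offdiag ?inord4_eq // !eqxx /= !mulr1n => invp_eq.
have : (z * p%:Z)%:~R = 1%:~R :> rat by rewrite intrM -invp_eq mulVf ?natr_p_neq0.
move=> /intr_inj /(congr1 absz); rewrite abszM /= => /eqP; rewrite muln_eq1.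
by case/andP => _ /eqP p1; move: p_prime; rewrite p1.
Qed.

End FirstCopy.

Lemma valid_word1 p b g : inGamma p g -> valid_word p [:: (b, g)].
Proof. by move=> Gg l; rewrite inE => /eqP ->. Qed.

Lemma valid_word_cat p u v : valid_word p u -> valid_word p v -> valid_word p (u ++ v).
Proof. by move=> u_valid v_valid l; rewrite mem_cat => /orP[/u_valid | /v_valid]. Qed.

Lemma unitary_normalmx n (U : 'M[Cplx]_n) : unitary U -> U \is normalmx.
Proof.
rewrite /unitary map_trmx => UU; apply/normalmxP.
by rewrite UU; apply/esym/mulmx1C.
Qed.

Definition rho n (f : word -> 'M[Cplx]_n) (b : bool) (g : 'M[rat]_4) := f [:: (b, g)].

Section Representation.
Variables (p n : nat) (f : word -> 'M[Cplx]_n).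
Hypotheses (p_gt0 : (0 < p)%N) (f_rep : amal_rep p f).

Lemma rep_nil : f [::] = 1%:M.
Proof.
case: f_rep => _ [f_cat f_unitary]; have nil_valid : valid_word p [::] by [].
have /mulmx1_unit [f_unit _] := f_unitary [::] nil_valid.
have f_idem : f [::] *m f [::] = f [::] *m 1%:M by rewrite mulmx1 -f_cat.
by have := congr1 (mulmx (invmx (f [::]))) f_idem; rewrite !mulKmx.
Qed.

Lemma rho_mul b g h : inGamma p g -> inGamma p h ->
  rho f b (g *m h) = rho f b g *m rho f b h.
Proof.
move=> Gg Gh; case: f_rep => f_amal [f_cat _].
rewrite /rho -f_cat; [apply: f_amal | exact: valid_word1..].
- by apply: valid_word1; apply: Gamma_mul.
- exact: valid_word_cat (valid_word1 Gg) (valid_word1 Gh).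
- exact: ae_sym (ae_mul [::] [::] b Gg Gh).
Qed.

Lemma rho1 b : rho f b 1%:M = 1%:M.
Proof.
case: f_rep => f_amal _; rewrite /rho -rep_nil.
by apply: f_amal (ae_one _ [::] [::] b) => //; apply: valid_word1 (Gamma1 p).
Qed.

Lemma rho_expr b g m : inGamma p g -> rho f b (g ^+ m) = rho f b g ^+ m.
Proof.
move=> Gg; elim: m => [|m IH]; first by rewrite !expr0 rho1.
by rewrite !exprSr -!mulmxE rho_mul ?IH //; apply: Gamma_expr.
Qed.

Lemma rho_unitary b g : inGamma p g -> unitary (rho f b g).
Proof. by case: f_rep => _ [_ f_unitary] Gg; apply/f_unitary/valid_word1. Qed.

Lemma rho_unit b g : inGamma p g -> rho f b g \in unitmx.
Proof. by move=> /(rho_unitary b) /mulmx1_unit []. Qed.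

Lemma rho_amalg x : inN x -> rho f true x = rho f false x.
Proof.
move=> Nx; case: f_rep => f_amal _.
by apply: f_amal (ae_amalg _ [::] [::] Nx); apply: valid_word1; apply: inN_Gamma.
Qed.

Lemma rho_abels_c_period b :
  exists2 K, (0 < K)%N & rho f b (abels_c p) ^+ (p ^ K) = rho f b (abels_c p).
Proof.
have Ga := Gamma_abels_a p; have Gb := Gamma_abels_b p.
have Gc := Gamma_abels_c p; have Gd := Gamma_abels_d p.
set A := rho f b (abels_a p); set B := rho f b abels_b; set C := rho f b (abels_c p).
have [K K_gt0 AK] : exists2 K, (0 < K)%N & A ^+ (p ^ K) = A.
  apply: (normalmx_conj_expr_period (unitary_normalmx (rho_unitary b Ga)) (rho_unit b Gd)).
  by rewrite -rho_expr // -!rho_mul ?abels_dilate //; apply: Gamma_expr.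
have rho_commute m : A ^+ m *m B = C ^+ m *m B *m A ^+ m.
  have Gam := Gamma_expr p_gt0 m Ga; have Gcm := Gamma_expr p_gt0 m Gc.
  by rewrite -!rho_expr // -!rho_mul ?abels_commutator //; apply: Gamma_mul.
have BA_unit : B *m A \in unitmx by rewrite unitmx_mul !rho_unit.
exists K => //; apply: (can_inj (mulmxK BA_unit)); rewrite !mulmxA.
have := rho_commute 1%N; rewrite !expr1 => <-.
by rewrite -[in LHS]AK -rho_commute AK.
Qed.

Lemma rho_abels_c_expS b m :
  rho f b (abels_c p) ^+ (p ^ m.+1) = rho f b abels_z ^+ (p ^ m).
Proof. by rewrite expnS exprM -rho_expr ?abels_c_expp //; apply: Gamma_abels_c. Qed.

End Representation.

Theorem proposition8p3 (p : nat) : prime p -> ~ amalgam_MAP p.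
Proof.
move=> p_prime MAP; have p_gt0 := prime_gt0 p_prime.
have Gc := Gamma_abels_c p; have Gc_inv := Gamma_abels_c_inv p.
have w_valid := valid_word_cat (valid_word1 (b := true) Gc) (valid_word1 (b := false) Gc_inv).
have [n [f [f_rep fw_neq1]]] := MAP _ w_valid (abels_word_nontrivial p_gt0 p_prime).
have [K1 K1_gt0 period1] := rho_abels_c_period p_gt0 f_rep true.
have [K2 K2_gt0 period2] := rho_abels_c_period p_gt0 f_rep false.
have /prednK K_eq : (0 < K1 * K2)%N by rewrite muln_gt0 K1_gt0 K2_gt0.
have rho_c_eq : rho f true (abels_c p) = rho f false (abels_c p).
  rewrite -(expr_period K2 period1) -(expr_period K1 period2) [(K2 * K1)%N]mulnC -K_eq.
  by rewrite !(rho_abels_c_expS p_gt0 f_rep) (rho_amalg f_rep inN_abels_z).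
apply: fw_neq1; have [_ [f_cat _]] := f_rep.
rewrite f_cat; [|exact: valid_word1..].
rewrite -/(rho f true (abels_c p)) -/(rho f false (abels_c_inv p)) rho_c_eq.
by rewrite -(rho_mul p_gt0 f_rep) // abels_c_mulV (rho1 f_rep).
Qed.
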